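(* Let $N\in\mathbb{N}$. Let $$\mathcal{B}(N)=\{(q_1,q_2)\in\mathbb{Z}^2\mid 3q_1^2+3q_2^2-2q_1-q_2=N\},$$ let $\mathcal{U}(12N+5)=\{(x,y)\in\mathbb{Z}^2\mid x^2+y^2=12N+5\}$, and let $\varphi:\mathcal{B}(N)\to\mathcal{U}(12N+5)$ be the (well-defined) map $\varphi(q_1,q_2)=(6q_1-2,\,6q_2-1)$. Let the dihedral group $D_8=\langle r,s\mid r^4=s^2=(rs)^2=1\rangle$ act on $\mathcal{U}(12N+5)$ by $r(x,y)=(-y,x)$ and $s(x,y)=(y,x)$. Then: (1) the action of $D_8$ on $\mathcal{U}(12N+5)$ is free; (2) $\varphi(\mathcal{B}(N))$ is a complete set of representatives of the $D_8$-orbits of $\mathcal{U}(12N+5)$.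
   Context: The expression $3q_1^2+3q_2^2-2q_1-q_2$ is the $\Lambda_0$-atomic length of the element $q=\sqrt2q_1\varepsilon_1+\sqrt2q_2\varepsilon_2$ of the lattice $M$ in affine type $D_3^{(2)}$, so $\mathcal{B}(N)$ parametrises the affine Grassmannian elements of type $D_3^{(2)}$ of atomic length $N$. *)

From mathcomp Require Import all_boot all_order all_algebra.
Set Implicit Arguments. Unset Strict Implicit. Unset Printing Implicit Defensive.
Import Order.TTheory GRing.Theory Num.Theory.
Local Open Scope ring_scope.

Definition inB (N : nat) (q : int * int) : Prop :=
  3 * q.1 ^+ 2 + 3 * q.2 ^+ 2 - 2 * q.1 - q.2 = N%:Z.

Definition inU (M : int) (u : int * int) : Prop :=
  u.1 ^+ 2 + u.2 ^+ 2 = M.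

Definition phi (q : int * int) : int * int := (6 * q.1 - 2, 6 * q.2 - 1).

Definition rot (u : int * int) : int * int := (- u.2, u.1).
Definition refl (u : int * int) : int * int := (u.2, u.1).

(* The dihedral group D_8 = <r,s | r^4 = s^2 = (rs)^2 = 1> has the 8 elements
   r^k s^e (k < 4, e in {0,1}); we index them by pairs (k, e).
   The identity is (0, false). *)
Definition D8 := ('I_4 * bool)%type.
Definition D8_one : D8 := (ord0, false).

Definition D8_act (g : D8) (u : int * int) : int * int :=
  iter (nat_of_ord g.1) rot (if g.2 then refl u else u).

(** D_8 acts by signed permutations of the coordinates.  A square is congruent
    mod 12 to the square of its residue mod 6, so it is [1] for [x = ±1 (mod 6)],
    [4] for [x = ±2 (mod 6)], and [0] or [9] otherwise.  Hence [x^2 + y^2 = 12N + 5]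
    forces one coordinate to be [±2] and the other [±1] mod 6.  Such points have
    non-zero coordinates of different parities, which rules out fixed points of
    non-trivial signed permutations.  Exactly one signed permutation brings them
    to residues [(4, 5)] mod 6, i.e. into the image of [phi], and [phi] identifies
    [B(N)] with the points of [U(12N+5)] with those residues because
    [|phi q|^2 = 12 (3 q1^2 + 3 q2^2 - 2 q1 - q2) + 5]. *)
From Pilot Require Import Defs.
From mathcomp Require Import all_boot all_order all_algebra.
From mathcomp Require Import zify ring.
Set Implicit Arguments. Unset Strict Implicit.
Import Order.TTheory GRing.Theory Num.Theory.
Local Open Scope ring_scope.

Lemma phi_norm (q : int * int) :
  (phi q).1 ^+ 2 + (phi q).2 ^+ 2
    = 12 * (3 * q.1 ^+ 2 + 3 * q.2 ^+ 2 - 2 * q.1 - q.2) + 5.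
Proof. rewrite /phi /=; ring. Qed.

Lemma inU_phi (N : nat) (q : int * int) :
  inU (12 * N%:Z + 5) (phi q) <-> inB N q.
Proof. by rewrite /inU /inB phi_norm; split=> [/addIr/mulfI -> | ->]. Qed.

Lemma phi_surj (v : int * int) :
  (v.1 %% 6 = 4)%Z -> (v.2 %% 6 = 5)%Z -> exists q, phi q = v.
Proof.
case: v => x y /= x4 y5; exists ((x + 2) %/ 6, (y + 1) %/ 6)%Z.
by rewrite /phi /=; congr pair; lia.
Qed.

Definition pm1_mod6 (a : int) : Prop := (a %% 6 = 1 \/ a %% 6 = 5)%Z.
Definition pm2_mod6 (a : int) : Prop := (a %% 6 = 2 \/ a %% 6 = 4)%Z.

Lemma sqr_mod12 (x : int) :
  pm1_mod6 x /\ (x ^+ 2 = 1 %[mod 12])%Z \/ pm2_mod6 x /\ (x ^+ 2 = 4 %[mod 12])%Z \/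
  (x ^+ 2 = 0 %[mod 12] \/ x ^+ 2 = 9 %[mod 12])%Z.
Proof.
rewrite /pm1_mod6 /pm2_mod6.
have := divz_eq x 6; have : (0 <= x %% 6 < 6)%Z by lia.
move: (x %/ 6)%Z (x %% 6)%Z => k r r_range ->.
have -> : (k * 6 + r) ^+ 2 = 12 * (3 * k ^+ 2 + k * r) + r ^+ 2 by ring.
have : r = 0 \/ r = 1 \/ r = 2 \/ r = 3 \/ r = 4 \/ r = 5 by lia.
by move=> [|[|[|[|[|]]]]] ->; lia.
Qed.

Lemma sqr_add_mod12_5 (x y : int) : (x ^+ 2 + y ^+ 2 = 5 %[mod 12])%Z ->
  pm2_mod6 x /\ pm1_mod6 y \/ pm1_mod6 x /\ pm2_mod6 y.
Proof.
by move=> sum5; have := sqr_mod12 x; have := sqr_mod12 y; rewrite /pm1_mod6 /pm2_mod6; lia.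
Qed.

Lemma inU_12_5_residues (N : nat) (u : int * int) : inU (12 * N%:Z + 5) u ->
  pm2_mod6 u.1 /\ pm1_mod6 u.2 \/ pm1_mod6 u.1 /\ pm2_mod6 u.2.
Proof. by rewrite /inU => sq; apply: sqr_add_mod12_5; rewrite sq; lia. Qed.

Lemma D8_act_sqnorm (g : D8) (u : int * int) :
  (D8_act g u).1 ^+ 2 + (D8_act g u).2 ^+ 2 = u.1 ^+ 2 + u.2 ^+ 2.
Proof.
case: g => [[k hk] e]; rewrite /D8_act /= {hk}.
elim: k => [|k IHk] /=; last by rewrite -IHk sqrrN addrC.
by case: e; rewrite //= addrC.
Qed.

Lemma inU_D8_act (M : int) (g : D8) (u : int * int) :
  inU M (D8_act g u) <-> inU M u.
Proof. by rewrite /inU D8_act_sqnorm. Qed.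

Lemma D8_act_nontrivial (g : D8) (u : int * int) : g != D8_one ->
  [\/ (D8_act g u).1 = - u.1, (D8_act g u).2 = - u.2,
      (D8_act g u).1 = u.2 | (D8_act g u).1 = - u.2].
Proof.
case: u => x y; case: g => [[[|[|[|[|k]]]] hk] []] //= g1;
  rewrite /D8_act /Defs.rot /Defs.refl /= ?opprK;
  by [constructor 1 | constructor 2 | constructor 3 | constructor 4 | rewrite eqxx in g1].
Qed.

Lemma D8_act_free (g : D8) (u : int * int) :
  u.1 != 0 -> u.2 != 0 -> u.1 != u.2 -> u.1 != - u.2 ->
  D8_act g u = u -> g = D8_one.
Proof.
move=> ? ? ? ? fix_u; case: (eqVneq g D8_one) => // /(D8_act_nontrivial u).
by rewrite fix_u; case; lia.
Qed.

Lemma D8_act_phi (g : D8) (q q' : int * int) :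
  D8_act g (phi q) = phi q' -> g = D8_one.
Proof.
move=> act_q; case: (eqVneq g D8_one) => // /(D8_act_nontrivial (phi q)).
by rewrite act_q /phi /=; case; lia.
Qed.

Lemma D8_orbit_phi (u : int * int) :
  pm2_mod6 u.1 /\ pm1_mod6 u.2 \/ pm1_mod6 u.1 /\ pm2_mod6 u.2 ->
  exists (g : D8) q, D8_act g (phi q) = u.
Proof.
case: u => x y; rewrite /pm1_mod6 /pm2_mod6 /= => residues.
suff [g [v [<- [v1 v2]]]] :
    exists (g : D8) v, D8_act g v = (x, y) /\ (v.1 %% 6 = 4)%Z /\ (v.2 %% 6 = 5)%Z.
  by have [q <-] := phi_surj v1 v2; exists g, q.
case: residues => [[[x2|x4] [y1|y5]] | [[x1|x5] [y2|y4]]];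
  [ exists (@Ordinal 4 2 isT, false), (- x, - y)
  | exists (@Ordinal 4 1 isT, true), (- x, y)
  | exists (@Ordinal 4 3 isT, true), (x, - y)
  | exists (@Ordinal 4 0 isT, false), (x, y)
  | exists (@Ordinal 4 2 isT, true), (- y, - x)
  | exists (@Ordinal 4 1 isT, false), (y, - x)
  | exists (@Ordinal 4 3 isT, false), (- y, x)
  | exists (@Ordinal 4 0 isT, true), (y, x) ];
  by rewrite /D8_act /= /Defs.rot /Defs.refl /= ?opprK; split=> //; lia.
Qed.

Theorem theorem8p17 (N : nat) :
  (* phi is well defined: B(N) -> U(12N+5) *)
  (forall q, inB N q -> inU (12 * N%:Z + 5) (phi q)) /\
  (* (1) the D_8 action on U(12N+5) is free *)
  (forall (g : D8) u, inU (12 * N%:Z + 5) u -> D8_act g u = u -> g = D8_one) /\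
  (* (2a) every orbit meets phi(B(N)) *)
  (forall u, inU (12 * N%:Z + 5) u ->
     exists (g : D8) q, inB N q /\ D8_act g (phi q) = u) /\
  (* (2b) each orbit meets phi(B(N)) in at most one point *)
  (forall (g : D8) q q', inB N q -> inB N q' ->
     D8_act g (phi q) = phi q' -> phi q = phi q').
Proof.
split; first by move=> q /inU_phi.
split.
  move=> g u /inU_12_5_residues; rewrite /pm1_mod6 /pm2_mod6 => res /D8_act_free.
  by apply; lia.
split.
  move=> u Uu; have [g [q Eu]] := D8_orbit_phi (inU_12_5_residues Uu).
  by exists g, q; split=> //; apply/inU_phi/(inU_D8_act _ g); rewrite Eu.
by move=> g q q' _ _ E; rewrite -E (D8_act_phi E).
Qed.
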